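(* Let $c,d\in\mathbb{R}$ with $d\neq0$ be given. Then $\mathcal{S}[\mu,\lambda]=\mathcal{S}^*[\mu,\lambda]$ for all $\mu,\lambda>0$.
   Context: Impulse time sequences are strictly increasing sequences $\{t_k\}$ in $(t_0,\infty)$, finite or infinite and unbounded, with no finite accumulation point. For $t\ge s\ge t_0$, $N(t,s)$ denotes the number of impulse times in the half-open interval $(s,t]$ and $N^*(t,s)$ the number of impulse times in the closed interval $[s,t]$. $\mathcal{S}[\mu,\lambda]$ is the class of impulse time sequences satisfying $-dN(t,s)-(c-\lambda)(t-s)\le\mu$ for all $t\ge s\ge t_0$, and $\mathcal{S}^*[\mu,\lambda]$ is the class of impulse time sequences satisfying $-dN^*(t,s)-(c-\lambda)(t-s)\le\mu$ for all $t\ge s\ge t_0$. *)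

From HB Require Import structures.
From mathcomp Require Import all_boot all_order all_algebra.
From mathcomp Require Import finmap.
From mathcomp Require Import all_classical all_reals.
Set Implicit Arguments. Unset Strict Implicit. Unset Printing Implicit Defensive.
Import Order.TTheory GRing.Theory Num.Theory.
Local Open Scope classical_set_scope.
Local Open Scope ring_scope.
Local Open Scope fset_scope.

(* An impulse time sequence is given by its length [len] (None = infinite,
   Some n = the finite sequence t_0 < ... < t_{n-1}) and the map [tk]. *)
Definition idx_dom (len : option nat) : set nat :=
  fun k => match len with Some n => (k < n)%N | None => True end.

Definition impulse_seq (R : realType) (t0 : R) (len : option nat)
    (tk : nat -> R) : Prop :=
  [/\ (forall k, idx_dom len k -> t0 < tk k),
      (forall i j, idx_dom len i -> idx_dom len j -> (i < j)%N -> tk i < tk j),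
      (len = None -> forall M : R, exists k, M < tk k) &
      (forall x : R, exists2 e : R, 0 < e &
         finite_set [set k | idx_dom len k /\ `|tk k - x| < e])].

Definition Ncount (R : realType) (len : option nat) (tk : nat -> R) (t s : R)
  : nat :=
  (#|` fset_set [set k | idx_dom len k /\ s < tk k /\ tk k <= t] |).

Definition Nstar (R : realType) (len : option nat) (tk : nat -> R) (t s : R)
  : nat :=
  (#|` fset_set [set k | idx_dom len k /\ s <= tk k /\ tk k <= t] |).

Definition S_class (R : realType) (c d t0 mu lam : R) :
    set (option nat * (nat -> R)) :=
  [set p | impulse_seq t0 p.1 p.2 /\
     forall t s, t0 <= s -> s <= t ->
       - d * (Ncount p.1 p.2 t s)%:R - (c - lam) * (t - s) <= mu].

Definition S_star_class (R : realType) (c d t0 mu lam : R) :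
    set (option nat * (nat -> R)) :=
  [set p | impulse_seq t0 p.1 p.2 /\
     forall t s, t0 <= s -> s <= t ->
       - d * (Nstar p.1 p.2 t s)%:R - (c - lam) * (t - s) <= mu].

From HB Require Import structures.
From mathcomp Require Import all_boot all_order all_algebra.
From mathcomp Require Import finmap.
From mathcomp Require Import all_classical all_reals.
From mathcomp Require Import ring lra.
Set Implicit Arguments. Unset Strict Implicit. Unset Printing Implicit Defensive.
Import Order.TTheory GRing.Theory Num.Theory.
Local Open Scope classical_set_scope.
Local Open Scope ring_scope.

(* Impulse times are isolated: every s has a neighbourhood on each side free
   of impulse times other than possibly s itself.  Hence N(t, s') = N*(t, s)
   for s' slightly below s and N*(t, s') = N(t, s) for s' slightly above s,
   so each defining inequality of one class follows from the other one up to
   an error (c - lambda)(s' - s) that can be made arbitrarily small. *)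

Definition idx_domb (len : option nat) (k : nat) : bool :=
  if len is Some n then (k < n)%N else true.

Lemma idx_domP len k : reflect (idx_dom len k) (idx_domb len k).
Proof. by case: len => [n|] /=; [apply: idP | constructor]. Qed.

Lemma idx_dom_le len i j : (i <= j)%N -> idx_dom len j -> idx_dom len i.
Proof. by case: len => //= n ij jn; apply: leq_ltn_trans ij jn. Qed.

Section ImpulseSeq.
Variables (R : realType) (t0 : R) (len : option nat) (tk : nat -> R).
Hypothesis tkI : impulse_seq t0 len tk.

Lemma impulse_gt0 k : idx_dom len k -> t0 < tk k.
Proof. by case: tkI => + _ _ _; apply. Qed.

Lemma impulse_homo i j : (i <= j)%N -> idx_dom len j -> tk i <= tk j.
Proof.
case: tkI => _ tk_lt _ _ ij dj; move: ij; rewrite leq_eqVlt => /orP[/eqP->//|ij].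
exact: ltW (tk_lt _ _ (idx_dom_le (ltnW ij) dj) dj ij).
Qed.

Lemma impulse_exceeds (x : R) : exists k, ~~ idx_domb len k || (x < tk k).
Proof.
case: tkI => _ _ tk_unbounded _; case E: len => [n|].
  by exists n; rewrite /= ltnn.
by have [k xk] := tk_unbounded E x; exists k; rewrite xk orbT.
Qed.

Lemma impulse_gap_left (s : R) :
  exists2 m, m < s & forall k, idx_dom len k -> m < tk k -> s <= tk k.
Proof.
have : exists k, ~~ idx_domb len k || (s <= tk k).
  have [k sk] := impulse_exceeds s.
  by exists k; case/orP: sk => [->//|/ltW->]; rewrite orbT.
case/ex_minnP => k0 k0P k0_min.
have below_k0 k : idx_dom len k -> tk k < s -> (k < k0)%N.
  move=> dk tks; rewrite ltnNge; apply/negP => k0k.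
  move: k0P; rewrite (introT (idx_domP _ _) (idx_dom_le k0k dk)) /=.
  by have := impulse_homo k0k dk; lra.
case: k0 => [|j] in k0P k0_min below_k0 *.
  exists (s - 1) => [|k dk _]; first lra.
  by rewrite leNgt; apply/negP => /(below_k0 k dk).
have [dj tjs] : idx_dom len j /\ tk j < s.
  have : ~~ (~~ idx_domb len j || (s <= tk j)).
    by apply/negP => /k0_min; rewrite ltnn.
  by rewrite negb_or negbK -ltNge => /andP[/idx_domP].
exists (tk j) => // k dk jk; rewrite leNgt; apply/negP => /(below_k0 k dk).
by rewrite ltnS => /impulse_homo/(_ dj); lra.
Qed.

Lemma impulse_gap_right (s : R) :
  exists2 m, s < m & forall k, idx_dom len k -> s < tk k -> m <= tk k.
Proof.
have [k1 k1P k1_min] := ex_minnP (impulse_exceeds s).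
exists (if idx_domb len k1 then tk k1 else s + 1).
  by case: (idx_domb len k1) k1P => //= _; lra.
move=> k dk sk'; have k1k : (k1 <= k)%N by apply: k1_min; rewrite sk' orbT.
by rewrite (introT (idx_domP _ _) (idx_dom_le k1k dk)); apply: impulse_homo.
Qed.

Lemma Ncount_eq_Nstar_left (t s del : R) : t0 <= s -> 0 < del ->
  exists s', [/\ t0 <= s', s' <= s, s - s' <= del &
                 Ncount len tk t s' = Nstar len tk t s].
Proof.
move=> t0s del0; have [m ms gap] := impulse_gap_left s.
pose s' := Num.max t0 (Num.max m (s - del)).
have s'_ge : [/\ t0 <= s', m <= s' & s - del <= s'] by rewrite !le_max !lexx !orbT.
have s's : s' <= s by rewrite !ge_max t0s (ltW ms) gerBl ltW.
case: s'_ge => t0s' ms' ss'; exists s'; split => //; first lra.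
rewrite /Ncount /Nstar; congr (#|` fset_set _|); apply/seteqP.
split=> k /= [dk [lek kt]]; split=> //; split=> //.
  by apply: gap dk _; lra.
by rewrite !gt_max impulse_gt0 //=; apply/andP; split; lra.
Qed.

Lemma Nstar_eq_Ncount_right (t s del : R) : s < t -> 0 < del ->
  exists s', [/\ s < s', s' <= t, s' - s <= del &
                 Nstar len tk t s' = Ncount len tk t s].
Proof.
move=> st del0; have [m sm gap] := impulse_gap_right s.
pose s' := Num.min t (Num.min m (s + del)).
have s'_le : [/\ s' <= t, s' <= m & s' <= s + del] by rewrite !ge_min !lexx !orbT.
have ss' : s < s' by rewrite !lt_min st sm ltrDl.
case: s'_le => s't s'm s'sd; exists s'; split => //; first lra.
rewrite /Ncount /Nstar; congr (#|` fset_set _|); apply/seteqP.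
split=> k /= [dk [lek kt]]; split=> //; split=> //; first lra.
by have := gap k dk lek; lra.
Qed.

Lemma Ncount_id (t : R) : Ncount len tk t t = 0%N.
Proof.
rewrite /Ncount (_ : [set k | _] = set0) ?fset_set0 //.
by apply/seteqP; split=> k //= [_ [tk_gt tk_le]]; lra.
Qed.

End ImpulseSeq.

Lemma le_of_perturbation (R : realType) (a L mu : R) :
  (forall del : R, 0 < del -> exists2 x : R, `|x| <= del & a + L * x <= mu) -> a <= mu.
Proof.
move=> near_a; apply/ler_addgt0Pr => e e0.
have L1 : 0 < `|L| + 1 by have := normr_ge0 L; lra.
have [x xe ax] := near_a (e / (`|L| + 1)) (divr_gt0 e0 L1).
have : `|L * x| <= e.
  rewrite normrM (le_trans (ler_wpM2l (normr_ge0 L) xe)) //.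
  by rewrite mulrA ler_pdivrMr // mulrDr mulr1 mulrC lerDl ltW.
have := ler_norm (- (L * x)); rewrite normrN; lra.
Qed.

Section Classes.
Variables (R : realType) (c d t0 mu lam : R).

Lemma S_class_sub_S_star : S_class c d t0 mu lam `<=` S_star_class c d t0 mu lam.
Proof.
move=> [len tk] [/= tkI tkS]; split=> // t s t0s st.
apply: (@le_of_perturbation _ _ (c - lam)) => del del0.
have [s' [t0s' s's ss' N_eq]] := Ncount_eq_Nstar_left tkI t t0s del0.
exists (s' - s); first by rewrite ler0_norm; lra.
apply: le_trans (tkS t s' t0s' (le_trans s's st)).
by rewrite N_eq le_eqVlt; apply/orP; left; apply/eqP; ring.
Qed.

Lemma S_star_sub_S_class : 0 <= mu ->
  S_star_class c d t0 mu lam `<=` S_class c d t0 mu lam.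
Proof.
move=> mu_ge0 [len tk] [/= tkI tkS]; split=> // t s t0s st.
have [->|st'] := eqVneq s t; first by rewrite Ncount_id // subrr !mulr0; lra.
have {st st'} st : s < t by rewrite lt_neqAle st' st.
apply: (@le_of_perturbation _ _ (c - lam)) => del del0.
have [s' [ss' s't s's N_eq]] := Nstar_eq_Ncount_right tkI st del0.
exists (s' - s); first by rewrite ger0_norm; lra.
apply: le_trans (tkS t s' (le_trans t0s (ltW ss')) s't).
by rewrite N_eq le_eqVlt; apply/orP; left; apply/eqP; ring.
Qed.

End Classes.

Theorem lemma2 (R : realType) (c d t0 : R) (hd : d != 0) :
  forall mu lam : R, 0 < mu -> 0 < lam ->
    S_class c d t0 mu lam = S_star_class c d t0 mu lam.
Proof.
move=> mu lam mu_gt0 _; apply/seteqP; split; first exact: S_class_sub_S_star.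
exact/S_star_sub_S_class/ltW.
Qed.
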